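(* Let $1\leq\alpha,\beta<\omega$, let $P$ be a poset and $n\in\omega$. Then $P\models\psi_{\alpha\beta n}$ if and only if for all $p,q\in P$ with $p\not\leq q$, $\exists$ has an $n$-strategy for the $(\alpha+1,\beta+1)$-game with starting position $(\{p\},\{q\})$.
   Context: Work in the first-order signature with one binary relation $\leq$; write $\vec{x}_k=(x_1,\ldots,x_k)$. For $1\leq k<\omega$: $J_k(\vec{x}_k,y)$ holds under assignment $v$ iff $v(y)$ is the join of $\{v(x_1),\ldots,v(x_k)\}$, $M_k(\vec{x}_k,y)$ iff $v(y)$ is their meet; $C_k(\vec{x}_k,y)=\bigvee_{i=1}^k(y=x_i)$, $D_k=\neg C_k$; $C_{km}(\vec{x}_k,\vec{y}_m)$ holds iff $\{v(y_j)\}\subseteq\{v(x_i)\}$. Let $\sigma_k(\vec{x}_k,c)=\exists z(C_k(\vec{x}_k,z)\wedge z\leq c)$, $\tau_{kr}(\vec{x}_k,\vec{a}_r,c)=C_{kr}(\vec{x}_k,\vec{a}_r)\wedge M_r(\vec{a}_r,c)$, $\rho_{ks}(\vec{x}_k,\vec{b}_s)=\exists z(C_k(\vec{x}_k,z)\wedge J_s(\vec{b}_s,z))$. Define $\phi_{krs0}(\vec{x}_k,y)=D_k(\vec{x}_k,y)$ and $\phi_{krs(n+1)}(\vec{x}_k,y)=\forall\vec{a}_r\forall\vec{b}_s\forall c\Big(\big(\sigma_k(\vec{x}_k,c)\to\phi_{(k+1)rsn}(\vec{x}_k,c,y)\big)\wedge\big(\tau_{kr}(\vec{x}_k,\vec{a}_r,c)\to\phi_{(k+1)rsn}(\vec{x}_k,c,y)\big)\wedge\big(\rho_{ks}(\vec{x}_k,\vec{b}_s)\to\bigvee_{i=1}^s\phi_{(k+1)rsn}(\vec{x}_k,b_i,y)\big)\Big)$,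 and $\psi_{rsn}=\forall x\forall y(\neg(x\leq y)\to\phi_{1rsn}(x,y))$. The $(\alpha,\beta)$-game on $P$ with starting position $(U_0,V)$ is played between $\forall$ and $\exists$ in rounds $0,1,2,\ldots$ with a set $U$, initially $U_0$, and $V$ fixed. Each round $\forall$ moves and $\exists$ responds: (1) if $b\geq a$ for some $a\in U$, $\forall$ may play $(b)$ and $\exists$ must add $b$ to $U$; (2) if $A\subseteq U$ with $|A|<\alpha$ and $\bigwedge A$ exists, $\forall$ may play $A$ and $\exists$ must add $\bigwedge A$; (3) if $B\subseteq P$ with $|B|<\beta$ and $\bigvee B$ exists and lies in $U$, $\forall$ may play $B$ and $\exists$ must choose some $b\in B$ and add it to $U$. $\forall$ wins in round $n$ if $U\cap V\neq\emptyset$ at the beginning of round $n$; $\exists$ has an $n$-strategy if she can guarantee that $\forall$ does not win until at least round $n+1$. *)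

From HB Require Import structures.
From mathcomp Require Import all_boot all_order.
Set Implicit Arguments. Unset Strict Implicit. Unset Printing Implicit Defensive.
Import Order.TTheory.
Local Open Scope order_scope.

Section Defs.
Context {d : Order.disp_t} {T : porderType d}.

Definition is_join (S : T -> Prop) (y : T) : Prop :=
  (forall s, S s -> s <= y) /\ (forall z, (forall s, S s -> s <= z) -> y <= z).
Definition is_meet (S : T -> Prop) (y : T) : Prop :=
  (forall s, S s -> y <= s) /\ (forall z, (forall s, S s -> z <= s) -> z <= y).

(* Semantics of the formulas; the assignment to x_1..x_k is the sequence xs
   (k = size xs). *)
Definition sigmaF (xs : seq T) (c : T) : Prop := exists z, z \in xs /\ z <= c.
Definition tauF (r : nat) (xs : seq T) (a : 'I_r -> T) (c : T) : Prop :=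
  (forall j, a j \in xs) /\ is_meet (fun w => exists j, w = a j) c.
Definition rhoF (s : nat) (xs : seq T) (b : 'I_s -> T) : Prop :=
  exists z, z \in xs /\ is_join (fun w => exists j, w = b j) z.

Fixpoint phiF (r s n : nat) (xs : seq T) (y : T) {struct n} : Prop :=
  match n with
  | 0 => y \notin xs
  | n'.+1 =>
      forall (a : 'I_r -> T) (b : 'I_s -> T) (c : T),
        (sigmaF xs c -> phiF r s n' (rcons xs c) y) /\
        (tauF xs a c -> phiF r s n' (rcons xs c) y) /\
        (rhoF xs b -> exists i : 'I_s, phiF r s n' (rcons xs (b i)) y)
  end.

Definition psiF (r s n : nat) : Prop :=
  forall x y : T, ~ (x <= y) -> phiF r s n [:: x] y.

(* The (al, be)-game with current set U and fixed V.
   e_strat al be n U V : Exists has an n-strategy from position (U, V), i.e.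
   she can guarantee that U meets V at the beginning of none of the rounds
   0..n. Finite sets A, B of size < al (resp. < be) are given by sequences. *)
Fixpoint e_strat (al be n : nat) (U V : T -> Prop) {struct n} : Prop :=
  (forall x, ~ (U x /\ V x)) /\
  match n with
  | 0 => True
  | n'.+1 =>
      (forall a b, U a -> a <= b ->
         e_strat al be n' (fun x => U x \/ x = b) V) /\
      (forall (A : seq T) m, (size A < al)%N -> (forall x, x \in A -> U x) ->
         is_meet (fun x => x \in A) m ->
         e_strat al be n' (fun x => U x \/ x = m) V) /\
      (forall (B : seq T) j, (size B < be)%N -> is_join (fun x => x \in B) j -> U j ->
         exists2 b, b \in B & e_strat al be n' (fun x => U x \/ x = b) V)
  end.

End Defs.

(* phi_{k r s n}(xs, y) transcribes "Exists has an n-strategy from position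
   ({xs}, {y}) in the (r+1, s+1)-game": sigma, tau and rho are Forall's moves
   (1), (2), (3), the disjunction under rho is Exists' reply, and phi_{k r s 0}
   says that Forall has not won yet.  Both directions go by induction on n,
   turning sequences of length <= r into families on 'I_r (padding with a
   repeated entry) and families into their codomains.  Empty moves are absorbed
   by move (1): an empty meet is the top, above any point of the nonempty set U,
   and an empty join lying in U lies below y. *)

From mathcomp Require Import all_boot all_order.
Set Implicit Arguments. Unset Strict Implicit.
Import Order.POrderTheory.
Local Open Scope order_scope.

Lemma nth_ordP (X : eqType) (x0 : X) (xs : seq X) r w :
  x0 \in xs -> (size xs <= r)%N ->
  (exists j : 'I_r, w = nth x0 xs j) <-> w \in xs.
Proof.
move=> x0xs xs_r; split=> [[j ->]|wxs].
  by case: (ltnP j (size xs)) => j_xs; [apply: mem_nth | rewrite nth_default].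
have w_r : (index w xs < r)%N by apply: leq_trans xs_r; rewrite index_mem.
by exists (Ordinal w_r); rewrite nth_index.
Qed.

Section Game.
Context {d : Order.disp_t} {T : porderType d}.

Lemma is_meet_ext (S S' : T -> Prop) m :
  (forall w, S w <-> S' w) -> is_meet S m -> is_meet S' m.
Proof.
move=> SS' [m_lb m_glb]; split=> [w /SS'|z z_lb]; first exact: m_lb.
by apply: m_glb => w /SS'; apply: z_lb.
Qed.

Lemma is_join_ext (S S' : T -> Prop) m :
  (forall w, S w <-> S' w) -> is_join S m -> is_join S' m.
Proof.
move=> SS' [m_ub m_lub]; split=> [w /SS'|z z_ub]; first exact: m_ub.
by apply: m_lub => w /SS'; apply: z_ub.
Qed.

Lemma e_strat_ext al be n (U U' V : T -> Prop) :
  (forall x, U x <-> U' x) -> e_strat al be n U V -> e_strat al be n U' V.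
Proof.
elim: n U U' => [|n IH] U U' UU' [disj moves].
  by split=> // x [/UU' Ux Vx]; apply: (disj x).
have UU'_add b x : U x \/ x = b <-> U' x \/ x = b by have := UU' x; tauto.
split=> [x [/UU' Ux Vx]|]; first exact: (disj x).
case: moves => [up [meet join]]; split; [|split].
- by move=> a b /UU' Ua ab; apply: IH (UU'_add b) (up a b Ua ab).
- move=> A m A_al A_U' Am; have A_U x : x \in A -> U x by move/A_U'/UU'.
  exact: IH (UU'_add m) (meet A m A_al A_U Am).
- move=> B j B_be Bj /UU' Uj; have [b Bb win] := join B j B_be Bj Uj.
  by exists b => //; apply: IH (UU'_add b) win.
Qed.

Lemma e_strat_rcons al be n (xs : seq T) c V :
  e_strat al be n (fun x => x \in xs \/ x = c) V <->
  e_strat al be n (fun x => x \in rcons xs c) V.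
Proof.
have mem_add x : x \in xs \/ x = c <-> x \in rcons xs c.
  rewrite mem_rcons in_cons orbC.
  by split=> [[->|->]|/orP[|/eqP]]; rewrite ?eqxx ?orbT; auto.
by split; apply: e_strat_ext => x; have := mem_add x; tauto.
Qed.

Variables r s : nat.

Lemma phiF_notin n (xs : seq T) y : phiF r s n xs y -> y \notin xs.
Proof.
elim: n xs => [//|n IH] xs phi; apply/negP => yxs.
have /IH := (phi (fun=> y) (fun=> y) y).1 (ex_intro _ y (conj yxs (lexx y))).
by rewrite mem_rcons mem_head.
Qed.

Lemma phiF_e_strat n (xs : seq T) y : (exists x0, x0 \in xs) ->
  phiF r s n xs y -> e_strat r.+1 s.+1 n (fun x => x \in xs) (fun x => x = y).
Proof.
elim: n xs => [|n IH] xs [x0 x0xs] phi.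
  by split=> // x [+ xy]; rewrite xy (negbTE phi).
split=> [x [+ xy]|]; first by rewrite xy (negbTE (phiF_notin phi)).
have win c : phiF r s n (rcons xs c) y ->
    e_strat r.+1 s.+1 n (fun x => x \in xs \/ x = c) (fun x => x = y).
  move/IH=> win; apply/e_strat_rcons/win.
  by exists c; rewrite mem_rcons mem_head.
have up a c : a \in xs -> a <= c ->
    e_strat r.+1 s.+1 n (fun x => x \in xs \/ x = c) (fun x => x = y).
  by move=> axs ac; apply/win/(phi (fun=> c) (fun=> c) c).1; exists a.
split; [exact: up | split].
- move=> [|a0 A] m; rewrite ltnS => A_r A_xs Am.
    by apply: up x0xs _; apply: Am.2 => w; rewrite in_nil.
  have a0A := mem_head a0 A.
  apply/win/(phi (fun i : 'I_r => nth a0 (a0 :: A) i) (fun=> m) m).2.1; split.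
    by move=> j; apply: A_xs; apply/(nth_ordP _ a0A A_r); exists j.
  by apply: is_meet_ext Am => w; apply: iff_sym (nth_ordP w a0A A_r).
- move=> [|b0 B] j; rewrite ltnS => B_s Bj jxs.
    have jy : j <= y by apply: Bj.2 => w; rewrite in_nil.
    have /phiF_notin :=
      (phi (fun=> y) (fun=> y) y).1 (ex_intro _ j (conj jxs jy)).
    by rewrite mem_rcons mem_head.
  have b0B := mem_head b0 B.
  have [|i phi_i] := (phi (fun=> y) (fun i : 'I_s => nth b0 (b0 :: B) i) y).2.2.
    exists j; split=> //.
    by apply: is_join_ext Bj => w; apply: iff_sym (nth_ordP w b0B B_s).
  exists (nth b0 (b0 :: B) i); last exact: win.
  by apply/(nth_ordP _ b0B B_s); exists i.
Qed.

Lemma e_strat_phiF n (xs : seq T) y :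
  e_strat r.+1 s.+1 n (fun x => x \in xs) (fun x => x = y) -> phiF r s n xs y.
Proof.
elim: n xs => [|n IH] xs [disj moves].
  by apply/negP => yxs; apply: (disj y).
case: moves => [up [meet join]] a b c; split; [|split].
- by case=> z [zxs zc]; apply/IH/e_strat_rcons; apply: up zxs zc.
- case=> a_xs ac; apply/IH/e_strat_rcons.
  apply: (meet (codom a)); first by rewrite size_codom card_ord.
    by move=> x /codomP [j ->].
  by apply: is_meet_ext ac => w; apply: rwP codomP.
- case=> z [zxs bz].
  have b_s : (size (codom b) < s.+1)%N by rewrite size_codom card_ord.
  have bz' : is_join (fun x => x \in codom b) z.
    by apply: is_join_ext bz => w; apply: rwP codomP.
  have [x /codomP [i ->] win] := join (codom b) z b_s bz' zxs.
  by exists i; apply/IH/e_strat_rcons.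
Qed.

End Game.

Theorem proposition5p4 (d : Order.disp_t) (P : porderType d) (al be n : nat) :
  (1 <= al)%N -> (1 <= be)%N ->
  (@psiF d P al be n <->
   forall p q : P, ~ (p <= q) ->
     e_strat al.+1 be.+1 n (fun x => x = p) (fun x => x = q)).
Proof.
move=> _ _.
have mem_seq1 (p x : P) : x \in [:: p] <-> x = p.
  by rewrite inE; split=> [/eqP|->].
split=> [psi p q pq | win p q pq].
  apply: e_strat_ext (phiF_e_strat _ (psi p q pq)) => [x|].
    exact: mem_seq1.
  by exists p; rewrite mem_head.
by apply: e_strat_phiF; apply: e_strat_ext (win p q pq) => x; apply: iff_sym.
Qed.
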